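(* Let $A,B\in M_\ell(F)$ commute, $H_X=(A\ \ B)$, $H_Z=(B^T\ \ -A^T)$, and fix idempotents $E_A,F_A$ associated with $A$ and $E_B,F_B$ associated with $B$. Define $$H_X^{(L)}=\begin{pmatrix}A&B\\0&I-E_A\end{pmatrix},\quad H_X^{(R)}=\begin{pmatrix}A&B\\ I-E_B&0\end{pmatrix},\quad H_Z^{(L)}=\begin{pmatrix}B^T&-A^T\\ (I-F_A)^T&0\end{pmatrix},\quad H_Z^{(R)}=\begin{pmatrix}B^T&-A^T\\ 0&(I-F_B)^T\end{pmatrix}.$$ Then for each $\mu\in\{L,R\}$, $$d_Z\bigl(\mathrm{CSS}(H_X,H_Z)\bigr)=\min\Bigl\{d_Z\bigl(\mathrm{CSS}(H_X^{(\mu)},H_Z)\bigr),\ d_Z\bigl(\mathrm{CSS}(H_X,H_Z^{(\mu)})\bigr)\Bigr\}.$$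
   Context: $F=\mathbb F_q$ is a finite field. For $H_X,H_Z$ with $H_XH_Z^T=0$, $d_Z(\mathrm{CSS}(H_X,H_Z))=\min\{\mathrm{wgt}(c):c\in C_{H_X}^\perp\setminus C_{H_Z}\}$, where $C_H$ is the row space of $H$, $C_H^\perp$ its orthogonal complement, and the minimum of the empty set is $\infty$. Idempotents associated with $A$: any $E_A,F_A$ with $E_A^2=E_A$, $F_A^2=F_A$, $\mathrm{rank}E_A=\mathrm{rank}F_A=\mathrm{rank}A$, $E_AA=AF_A=A$; similarly $E_B,F_B$ for $B$. (All pairs of matrices above satisfy the CSS orthogonality condition.) *)

From HB Require Import structures.
From mathcomp Require Import all_boot all_order all_algebra all_field.
Set Implicit Arguments. Unset Strict Implicit. Unset Printing Implicit Defensive.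
Import GRing.Theory.
Local Open Scope ring_scope.

Definition wgt (F : finFieldType) (n : nat) (c : 'rV[F]_n) : nat :=
  #|[set i : 'I_n | c 0 i != 0]|.

Definition in_dual (F : finFieldType) (m n : nat) (H : 'M[F]_(m, n))
  (c : 'rV[F]_n) : bool := H *m c^T == 0.

Definition dZ_set (F : finFieldType) (mx mz n : nat)
  (HX : 'M[F]_(mx, n)) (HZ : 'M[F]_(mz, n)) : {set 'rV[F]_n} :=
  [set c : 'rV[F]_n | in_dual HX c && ~~ (c <= HZ)%MS].

(* Z-distance; None encodes infinity (minimum of the empty set). *)
Definition dZ (F : finFieldType) (mx mz n : nat)
  (HX : 'M[F]_(mx, n)) (HZ : 'M[F]_(mz, n)) : option nat :=
  match [pick c in dZ_set HX HZ] with
  | Some c0 => Some (\big[minn/wgt c0]_(c in dZ_set HX HZ) wgt c)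
  | None => None
  end.

Definition minO (a b : option nat) : option nat :=
  match a, b with
  | None, _ => b
  | _, None => a
  | Some x, Some y => Some (minn x y)
  end.

Definition assoc_idempotents (F : finFieldType) (l : nat) (A E G : 'M[F]_l) : Prop :=
  E *m E = E /\ G *m G = G /\ \rank E = \rank A /\ \rank G = \rank A /\
  E *m A = A /\ A *m G = A.

From HB Require Import structures.
From mathcomp Require Import all_boot all_order all_algebra all_field.
Import GRing.Theory.
Local Open Scope ring_scope.

(* The Z-distance of CSS(H_X, H_Z) is the minimal weight of the set
   D(H_X, H_Z) = C_{H_X}^perp \ C_{H_Z}.  Suppose we add rows Y to H_X and
   rows W to H_Z such that Y is orthogonal to every row of H_Z and of W.
   Then D(H_X, H_Z) splits as the union of D(H_X;Y, H_Z) and D(H_X, H_Z;W):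
   a word c of D(H_X, H_Z) with Y c^T = 0 lies in the first set, and one
   with Y c^T <> 0 cannot lie in C_{H_Z;W}, which is orthogonal to Y.
   Since the minimal weight of a union of two sets is the minimum of the
   minimal weights (in N u {oo}), the distance formula follows. *)

Section MinimalWeight.
Variables (F : finFieldType) (n : nat).
Implicit Types (S : {set 'rV[F]_n}) (o : option nat).

Definition min_wgt S : option nat :=
  match [pick c in S] with
  | Some c0 => Some (\big[minn/wgt c0]_(c in S) wgt c)
  | None => None
  end.

Lemma dZE mx mz (HX : 'M[F]_(mx, n)) (HZ : 'M[F]_(mz, n)) :
  dZ HX HZ = min_wgt (dZ_set HX HZ).
Proof. by []. Qed.

Definition min_wgt_spec S o : Prop :=
  match o with
  | None => forall c, c \notin S
  | Some m => (forall c, c \in S -> (m <= wgt c)%N) /\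
              exists2 c, c \in S & m = wgt c
  end.

Lemma bigminn_le (I : eqType) (r : seq I) (P : pred I) (f : I -> nat) idx c :
  c \in r -> P c -> (\big[minn/idx]_(i <- r | P i) f i <= f c)%N.
Proof.
elim: r => [|x r IHr] //; rewrite inE big_cons => /orP [/eqP <-|c_r] Pc.
  by rewrite Pc geq_minl.
case: (P x); last exact: IHr.
exact: leq_trans (geq_minr _ _) (IHr c_r Pc).
Qed.

Lemma min_wgtP S : min_wgt_spec S (min_wgt S).
Proof.
rewrite /min_wgt; case: pickP => [c0 S_c0|S0] /=; last by move=> c; rewrite S0.
split=> [c S_c|]; first by apply: bigminn_le; rewrite ?mem_index_enum.
apply: (big_ind (fun m => exists2 c, c \in S & m = wgt c)) => [|m1 m2|c S_c].
- by exists c0.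
- move=> [c1 S_c1 ->] [c2 S_c2 ->].
  by case: leqP => _; [exists c1 | exists c2].
- by exists c.
Qed.

Lemma min_wgt_spec_uniq S o : min_wgt_spec S o -> min_wgt S = o.
Proof.
have := min_wgtP S; case: (min_wgt S) => [m|]; case: o => [m'|] //=.
- move=> [lb [c S_c m_c]] [lb' [c' S_c' m'_c']]; congr Some.
  by apply/eqP; rewrite eqn_leq {1}m'_c' lb //= m_c lb'.
- by move=> [_ [c S_c _]] S0; move: (S0 c); rewrite S_c.
- by move=> S0 [_ [c S_c _]]; move: (S0 c); rewrite S_c.
Qed.

Lemma min_wgtU S1 S2 : min_wgt (S1 :|: S2) = minO (min_wgt S1) (min_wgt S2).
Proof.
apply: min_wgt_spec_uniq.
move: (min_wgtP S1) (min_wgtP S2).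
case: (min_wgt S1) => [m1|]; case: (min_wgt S2) => [m2|] /=.
- move=> [lb1 [c1 S_c1 m1_c1]] [lb2 [c2 S_c2 m2_c2]]; split.
  + move=> c; rewrite inE => /orP [S_c|S_c].
    * exact: leq_trans (geq_minl _ _) (lb1 _ S_c).
    * exact: leq_trans (geq_minr _ _) (lb2 _ S_c).
  + by case: leqP => _; [exists c1 | exists c2]; rewrite ?inE ?S_c1 ?S_c2 ?orbT.
- move=> [lb1 [c1 S_c1 m1_c1]] S20; split; last by exists c1; rewrite ?inE ?S_c1.
  by move=> c; rewrite inE (negbTE (S20 c)) orbF; apply: lb1.
- move=> S10 [lb2 [c2 S_c2 m2_c2]]; split; last by exists c2; rewrite ?inE ?S_c2 ?orbT.
  by move=> c; rewrite inE (negbTE (S10 c)); apply: lb2.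
- by move=> S10 S20 c; rewrite inE negb_or S10 S20.
Qed.

End MinimalWeight.

Section SplittingDistance.
Variables (F : finFieldType) (n mx my mz mw : nat).
Variables (HX : 'M[F]_(mx, n)) (Y : 'M[F]_(my, n)).
Variables (HZ : 'M[F]_(mz, n)) (W : 'M[F]_(mw, n)).

Hypothesis YperpZW : col_mx HZ W *m Y^T = 0.

Lemma span_orthogonal (c : 'rV[F]_n) : (c <= col_mx HZ W)%MS -> Y *m c^T = 0.
Proof.
case/submxP => D ->.
by rewrite trmx_mul mulmxA -[Y]trmxK -trmx_mul YperpZW trmx0 mul0mx.
Qed.

(* A word of D(H_X, H_Z) either satisfies the checks Y, or is outside the
   span of H_Z;W, which Y annihilates. *)
Lemma dZ_set_split :
  dZ_set HX HZ = dZ_set (col_mx HX Y) HZ :|: dZ_set HX (col_mx HZ W).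
Proof.
apply/setP => c; rewrite !inE /in_dual mul_col_mx col_mx_eq0.
have Z_ZW : (c <= HZ)%MS -> (c <= col_mx HZ W)%MS.
  by move=> cZ; rewrite (submx_trans cZ) // -addsmxE addsmxSl.
have ZW_Y : (c <= col_mx HZ W)%MS -> Y *m c^T == 0.
  by move/span_orthogonal ->.
case: (HX *m c^T == 0) => //=.
case: (boolP (c <= HZ)%MS) => [cZ|_]; first by rewrite Z_ZW ?andbF.
by case: (boolP (Y *m c^T == 0)) => // Yc; rewrite (contra ZW_Y Yc).
Qed.

Lemma dZ_split :
  dZ HX HZ = minO (dZ (col_mx HX Y) HZ) (dZ HX (col_mx HZ W)).
Proof. by rewrite !dZE dZ_set_split min_wgtU. Qed.

End SplittingDistance.

Lemma idempotent_compl_annihilates {F : fieldType} {l : nat} {A E : 'M[F]_l} :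
  E *m A = A -> (1%:M - E) *m A = 0.
Proof. by move=> EA; rewrite mulmxBl mul1mx EA subrr. Qed.

(* Both pairs of extra rows, (0, I - E_A) with ((I - F_A)^T, 0) and
   (I - E_B, 0) with (0, (I - F_B)^T), are orthogonal to H_Z and to each
   other, because (I - E_A) A = 0 and (I - E_B) B = 0. *)
Theorem mainTheorem7 (F : finFieldType) (l : nat) (A B EA FA EB FB : 'M[F]_l) :
  A *m B = B *m A ->
  assoc_idempotents A EA FA ->
  assoc_idempotents B EB FB ->
  let HX := row_mx A B in
  let HZ := row_mx B^T (- A^T) in
  let HXL := col_mx (row_mx A B) (row_mx 0 (1%:M - EA)) in
  let HXR := col_mx (row_mx A B) (row_mx (1%:M - EB) 0) in
  let HZL := col_mx (row_mx B^T (- A^T)) (row_mx (1%:M - FA)^T 0) in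
  let HZR := col_mx (row_mx B^T (- A^T)) (row_mx 0 (1%:M - FB)^T) in
  dZ HX HZ = minO (dZ HXL HZ) (dZ HX HZL) /\
  dZ HX HZ = minO (dZ HXR HZ) (dZ HX HZR).
Proof.
move=> _ [_ [_ [_ [_ [EA_A _]]]]] [_ [_ [_ [_ [EB_B _]]]]] HX HZ HXL HXR HZL HZR.
have EA0 := idempotent_compl_annihilates EA_A.
have EB0 := idempotent_compl_annihilates EB_B.
split; apply: dZ_split; rewrite /HZ tr_row_mx trmx0 mul_col_mx !mul_row_col.
- by rewrite !mulmx0 mul0mx !addr0 mulNmx -trmx_mul EA0 trmx0 oppr0 addr0 col_mx0.
- by rewrite !mulmx0 mul0mx !addr0 -trmx_mul EB0 trmx0 col_mx0.
Qed.
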